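(* Let $T$ be a tournament and $x\in\mathrm{SA}_1(T)$. If $x_v<3/7$ for all $v\in V(T)$, then $T$ is light.
   Context: A triangle of a tournament $T$ is a set $\{a,b,c\}\subseteq V(T)$ inducing a directed 3-cycle. An unordered pair $ab$ of vertices is a diagonal if there exist vertices $u,v$ with $\{u,v,a\}$ and $\{u,v,b\}$ both triangles. A triangle is heavy if at least two of its three pairs of vertices are diagonals. A tournament is heavy if it has a heavy triangle, and light otherwise. $E(T)$ is the set of unordered pairs of distinct vertices. $\mathrm{SA}_1(T)$ is the set of $x\in\mathbb{R}^{V(T)}$ for which there exists $(x_{ab})_{ab\in E(T)}$ such that: for every triangle $\{a,b,c\}$ (any labelling) and every $d\in V(T)\setminus\{a,b,c\}$, (1) $x_a+x_b+x_c\ge 1+x_{ab}+x_{bc}$, (2) $x_{ad}+x_{bd}+x_{cd}\ge x_d$, (3) $x_a+x_b+x_c+x_d\ge 1+x_{ad}+x_{bd}+x_{cd}$; and for all distinct $a,b$, (4) $1\ge x_a\ge x_{ab}\ge 0$. *)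

From mathcomp Require Import all_boot all_order all_algebra.
Set Implicit Arguments. Unset Strict Implicit. Unset Printing Implicit Defensive.
Import Order.TTheory GRing.Theory Num.Theory.
Local Open Scope ring_scope.

Section Tournament.
Variable V : finType.
Variable E : rel V.

Definition is_tournament : Prop :=
  (forall u, ~~ E u u) /\
  (forall u v, u != v -> (E u v || E v u)) /\
  (forall u v, E u v -> ~~ E v u).

Definition is_triangle (a b c : V) : bool :=
  [&& a != b, b != c, a != c &
   (E a b && E b c && E c a) || (E a c && E c b && E b a)].

Definition is_diagonal (a b : V) : Prop :=
  a != b /\ exists u v, is_triangle u v a /\ is_triangle u v b.

Definition is_heavy_triangle (a b c : V) : Prop :=
  is_triangle a b c /\
  ((is_diagonal a b /\ is_diagonal b c) \/
   (is_diagonal b c /\ is_diagonal a c) \/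
   (is_diagonal a b /\ is_diagonal a c)).

Definition heavy : Prop := exists a b c, is_heavy_triangle a b c.
Definition light : Prop := ~ heavy.

(* SA_1(T): pair variables x_{ab} are given by a symmetric function y
   (only its values on distinct pairs matter). *)
Definition in_SA1 (R : realFieldType) (x : V -> R) : Prop :=
  exists y : V -> V -> R,
    (forall a b, y a b = y b a) /\
    (forall a b c d, is_triangle a b c -> d != a -> d != b -> d != c ->
       [/\ x a + x b + x c >= 1 + y a b + y b c,
           y a d + y b d + y c d >= x d &
           x a + x b + x c + x d >= 1 + y a d + y b d + y c d]) /\
    (forall a b, a != b -> (1 >= x a) /\ (x a >= y a b) /\ (y a b >= 0)).
End Tournament.

From mathcomp Require Import all_boot all_order all_algebra.
From mathcomp Require Import lra.
Import Order.TTheory GRing.Theory Num.Theory.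
Local Open Scope ring_scope.

(* If ab is a diagonal,
   witnessed by triangles {u,v,a} and {u,v,b}, then inequality (2) for the
   triangle {u,v,a} and the outside vertex b, added to inequality (1) for the
   triangle {u,b,v} (with a as the required fourth vertex), gives
   x_u + x_v + y_ab >= 1; since x < 3/7 everywhere, y_ab > 1/7.
   A heavy triangle has two diagonals sharing a vertex, say ab and bc; then
   inequality (1) for {a,b,c} reads x_a + x_b + x_c >= 1 + y_ab + y_bc > 9/7,
   contradicting x_a + x_b + x_c < 9/7.  (The fourth vertex required by (1)
   is provided by a witness of one of the diagonals.)
   The file first records the symmetries of triangles and diagonals, then
   the bound on diagonal pair variables, then rules out a heavy triangle with
   a prescribed shared vertex; the theorem follows by relabelling. *)

Section Triangles.
Context {V : finType} {E : rel V}.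

(* Being a triangle does not depend on the labelling: rotations and a
   transposition generate all relabellings.  Both are boolean case checks. *)
Lemma triangle_rot {a b c} : is_triangle E a b c -> is_triangle E b c a.
Proof.
rewrite /is_triangle (eq_sym c a) (eq_sym b a).
by case: (a == b); case: (b == c); case: (a == c);
  case: (E a b); case: (E b c); case: (E c a); case: (E a c); case: (E c b);
  case: (E b a).
Qed.

Lemma triangle_swap {a b c} : is_triangle E a b c -> is_triangle E b a c.
Proof.
rewrite /is_triangle (eq_sym b a).
by case: (a == b); case: (b == c); case: (a == c);
  case: (E a b); case: (E b c); case: (E c a); case: (E a c); case: (E c b);
  case: (E b a).
Qed.

Lemma triangle_neq {a b c} :
  is_triangle E a b c -> [/\ a != b, b != c & a != c].
Proof. by case/and4P. Qed.

Lemma diagonal_sym {a b} : is_diagonal E a b -> is_diagonal E b a.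
Proof. by case=> nab [u [v [tua tub]]]; split; [rewrite eq_sym | exists u, v]. Qed.

(* A diagonal ab supplies, for any c, a vertex outside {a, b, c}: one of the
   two distinct witnesses u, v avoids c. *)
Lemma diagonal_fourth_vertex {a b} c :
  is_diagonal E a b -> exists d, [&& d != a, d != b & d != c].
Proof.
case=> _ [u [v [tua tub]]].
have [nuv nva nua] := triangle_neq tua; have [_ nvb nub] := triangle_neq tub.
have [<-|nuc] := eqVneq u c; last by exists u; rewrite nua nub nuc.
by exists v; rewrite (eq_sym v u) nuv nva nvb.
Qed.

End Triangles.

Section SA1Bounds.
Context {V : finType} {E : rel V} {R : realFieldType} {x : V -> R}.
Context {y : V -> V -> R}.
Hypothesis y_sym : forall a b, y a b = y b a.
Hypothesis sa1_triangle : forall a b c d,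
  is_triangle E a b c -> d != a -> d != b -> d != c ->
  [/\ x a + x b + x c >= 1 + y a b + y b c,
      y a d + y b d + y c d >= x d &
      x a + x b + x c + x d >= 1 + y a d + y b d + y c d].

(* Key inequality: if {u,v,a} and {u,v,b} are triangles, then
   x_u + x_v + y_ab >= 1.  Sum (2) for {u,v,a} with outside vertex b and
   (1) for {u,b,v} with outside vertex a; x_b and y_ub + y_bv cancel. *)
Lemma diagonal_pair_bound {u v a b} :
  is_triangle E u v a -> is_triangle E u v b -> a != b ->
  1 <= x u + x v + y a b.
Proof.
move=> tua tub nab.
have [nuv nva nua] := triangle_neq tua; have [_ nvb nub] := triangle_neq tub.
have [nbu nbv nba] : [/\ b != u, b != v & b != a] by rewrite !(eq_sym b).
have [nau nav] : a != u /\ a != v by rewrite !(eq_sym a).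
have [_ cover_b _] := sa1_triangle _ _ _ _ tua nbu nbv nba.
have [triangle_ubv _ _] :=
  sa1_triangle _ _ _ _ (triangle_rot (triangle_swap tub)) nau nab nav.
rewrite (y_sym b v) in triangle_ubv.
lra.
Qed.

Hypothesis x_small : forall v, x v < 3 / 7.

Lemma diagonal_weight {a b} : is_diagonal E a b -> 1 / 7 < y a b.
Proof.
case=> nab [u [v [tua tub]]].
have := diagonal_pair_bound tua tub nab; have := x_small u; have := x_small v.
lra.
Qed.

(* No triangle abc has both ab and bc as diagonals: inequality (1) would
   force x_a + x_b + x_c > 9/7. *)
Lemma no_diagonal_wedge {a b c} :
  is_triangle E a b c -> is_diagonal E a b -> is_diagonal E b c -> False.
Proof.
move=> tabc dab dbc.
have [d /and3P [nda ndb ndc]] := diagonal_fourth_vertex c dab.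
have [triangle_abc _ _] := sa1_triangle _ _ _ _ tabc nda ndb ndc.
have := diagonal_weight dab; have := diagonal_weight dbc.
have := x_small a; have := x_small b; have := x_small c.
lra.
Qed.

End SA1Bounds.

Theorem lemma1 (R : realFieldType) (V : finType) (E : rel V)
  (HT : is_tournament E) (x : V -> R) (Hx : in_SA1 E x)
  (Hsmall : forall v, x v < 3 / 7) :
  light E.
Proof.
case: Hx => y [y_sym [sa1_triangle _]] [a [b [c [tabc diagonals]]]].
have wedge := no_diagonal_wedge y_sym sa1_triangle Hsmall.
case: diagonals => [[dab dbc] | [[dbc dac] | [dab dac]]].
- exact: wedge tabc dab dbc.
- exact: wedge (triangle_rot tabc) dbc (diagonal_sym dac).
- exact: wedge (triangle_swap tabc) (diagonal_sym dab) dac.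
Qed.
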